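(* Consider $N$ agents with dynamics $\dot q_i=v_i$, $M_i(q_i)\dot v_i+C_i(q_i,v_i)v_i+g_i(q_i)=\tau_i$, $i=1,\dots,N$, satisfying the standing assumptions below, and a directed graph with $N$ nodes, $M$ edges and incidence matrix $B$. Let $q_d(t)\in\mathbb{R}^n$ be a smooth reference trajectory. Let $\Pi_i,K_i\in\mathbb{R}^{n\times n}$ be symmetric positive definite, and let $K_\zeta\in\mathbb{R}^{Mn\times Mn}$ be symmetric positive definite. Define $\tilde q_i=q_i-q_d$, $v_{i,r}=\dot q_d-\Pi_i\tilde q_i$, $s_i=v_i-v_{i,r}$, and apply to each agent the control law $$\tau_i=M_i(q_i)\dot v_{i,r}+C_i(q_i,\dot q_i)v_{i,r}+g_i(q_i)-K_is_i-\Pi_i\tilde q_i+u_i .$$ To each edge $k$ attach an artificial spring state $\zeta_k\in\mathbb{R}^n$ with potential $P_\zeta(\zeta)=\tfrac12(\zeta-\zeta_d)^\top K_\zeta(\zeta-\zeta_d)$, where $\zeta=(\zeta_1^\top,\dots,\zeta_M^\top)^\top$ and $\zeta_d\in\mathbb{R}^{Mn}$ is a constant vector of desired relative displacements, with edge dynamics $\dot\zeta=\mu-\frac{\partial P_\zeta}{\partial\zeta}(\zeta)$ and edge output $\frac{\partial P_\zeta}{\partial \zeta}(\zeta)=K_\zeta(\zeta-\zeta_d)$, and interconnect via $\mu=(B^\top\otimes I_n)s$, $u=-(B\otimes I_n)K_\zeta(\zeta-\zeta_d)$, where $s,u$ are the stacked vectors of $s_i,u_i$. The resulting closed-loop system is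 $$\dot{\tilde q}+\Pi\tilde q=s,\quad M(q)\dot s+C(q,\dot q)s+Ks=-\Pi\tilde q-(B\otimes I_n)K_\zeta(\zeta-\zeta_d),\quad \dot\zeta+K_\zeta(\zeta-\zeta_d)=(B^\top\otimes I_n)s,$$ with $\Pi=\mathrm{diag}(\Pi_1,\dots,\Pi_N)$, $K=\mathrm{diag}(K_1,\dots,K_N)$. Then the function $$S(\tilde q,s,\zeta,q)=\tfrac12\tilde q^\top\Pi\tilde q+\tfrac12 s^\top M(q)s+P_\zeta(\zeta)$$ satisfies, along all solutions, $\dot S=-\tilde q^\top\Pi^2\tilde q-s^\top Ks-(\zeta-\zeta_d)^\top K_\zeta^2(\zeta-\zeta_d)$ and $\dot S\le-\beta S$, with $\beta=k_3/k_2$, where $k_2=\max\{\lambda_{\max}(\Pi),\ \sup_q\lambda_{\max}(M(q)),\ \lambda_{\max}(K_\zeta)\}$ and $k_3=\min\{\lambda_{\min}(\Pi^2),\ \lambda_{\min}(K),\ \lambda_{\min}(K_\zeta^2)\}$. Consequently the equilibrium $(\tilde q,s,\zeta)=(0,0,\zeta_d)$ is globally uniformly exponentially stable, with $S(t)\le e^{-\beta t}S(0)$.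
   Context: Standing assumptions: each $q_i\in\mathbb{R}^n$; $M_i(q_i)$ is symmetric positive definite and uniformly bounded, i.e. there exist constants $0<m_1\le m_2$ with $m_1I\le M_i(q_i)\le m_2 I$ for all $q_i$; $g_i(q_i)=\frac{\partial P_i}{\partial q_i}(q_i)$ for a potential function $P_i$; $C_i(q_i,v_i)$ is a matrix satisfying $C_i(q_i,v_i)v_i=\dot M_i(q_i)v_i-\frac{\partial}{\partial q_i}\big(\tfrac12 v_i^\top M_i(q_i)v_i\big)$ and such that $\dot M_i(q_i)-2C_i(q_i,v_i)$ is skew-symmetric for all $q_i,v_i$. Stacked quantities: $q=(q_1^\top,\dots,q_N^\top)^\top$, similarly $v,\tau,s,u$; $M(q)=\mathrm{diag}(M_1(q_1),\dots,M_N(q_N))$, $C(q,v)=\mathrm{diag}(C_1,\dots,C_N)$. The incidence matrix $B\in\mathbb{R}^{N\times M}$ of a directed graph has entries $b_{ik}=-1$ if node $i$ is the tail of edge $k$, $b_{ik}=1$ if node $i$ is the head of edge $k$, and $0$ otherwise. $\otimes$ denotes the Kronecker product; $\lambda_{\min},\lambda_{\max}$ denote minimal/maximal eigenvalues. *)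

From mathcomp Require Import ssreflect ssrfun ssrbool eqtype ssrnat seq choice fintype bigop.
From Stdlib Require Import Reals.

Set Implicit Arguments.
Unset Strict Implicit.
Unset Printing Implicit Defensive.

Local Open Scope R_scope.

(** Vectors over a finite index type I are functions I -> R; matrices are
    functions I -> J -> R (row index first). *)

Definition rsum {I : finType} (F : I -> R) : R := \big[Rplus/R0]_(p : I) F p.

Definition dot {I : finType} (x y : I -> R) : R := rsum (fun p => x p * y p).
Definition sqnorm {I : finType} (x : I -> R) : R := dot x x.

Definition mv {I J : finType} (A : I -> J -> R) (x : J -> R) : I -> R :=
  fun p => rsum (fun r => A p r * x r).
Definition mm {I J K : finType} (A : I -> J -> R) (C : J -> K -> R) : I -> K -> R :=
  fun p r => rsum (fun j => A p j * C j r).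
Definition tr {I J : finType} (A : I -> J -> R) : J -> I -> R := fun r p => A p r.
Definition quad {I : finType} (A : I -> I -> R) (x : I -> R) : R := dot x (mv A x).
Definition vsub {I : finType} (x y : I -> R) : I -> R := fun p => x p - y p.

Definition msym {I : finType} (A : I -> I -> R) : Prop :=
  forall p r, A p r = A r p.
Definition mskew {I : finType} (A : I -> I -> R) : Prop :=
  forall p r, A p r = - A r p.
Definition nonzero {I : finType} (x : I -> R) : Prop := exists p, x p <> 0.
Definition spd {I : finType} (A : I -> I -> R) : Prop :=
  msym A /\ forall x, nonzero x -> 0 < quad A x.

Definition eigenvalue {I : finType} (A : I -> I -> R) (l : R) : Prop :=
  exists x, nonzero x /\ forall p, mv A x p = l * x p.
Definition is_lambda_max {I : finType} (A : I -> I -> R) (l : R) : Prop :=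
  eigenvalue A l /\ forall mu, eigenvalue A mu -> mu <= l.
Definition is_lambda_min {I : finType} (A : I -> I -> R) (l : R) : Prop :=
  eigenvalue A l /\ forall mu, eigenvalue A mu -> l <= mu.

(** Stacked spaces: agent space R^{Nn} indexed by 'I_N * 'I_n (agent, component),
    edge space R^{Mn} indexed by 'I_M * 'I_n (edge, component). *)
Definition blk {N n : nat} (x : 'I_N * 'I_n -> R) (i : 'I_N) : 'I_n -> R :=
  fun a => x (i, a).

Definition bdiag {N n : nat} (F : 'I_N -> 'I_n -> 'I_n -> R) :
  'I_N * 'I_n -> 'I_N * 'I_n -> R :=
  fun p r => if p.1 == r.1 then F p.1 p.2 r.2 else 0.

Definition kronI {N M : nat} (n : nat) (A : 'I_N -> 'I_M -> R) :
  'I_N * 'I_n -> 'I_M * 'I_n -> R :=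
  fun p e => A p.1 e.1 * (if p.2 == e.2 then 1 else 0).

Definition is_incidence {N M : nat} (B : 'I_N -> 'I_M -> R) : Prop :=
  exists (tail head : 'I_M -> 'I_N),
    (forall k, tail k <> head k) /\
    forall i k, B i k = if i == tail k then -1 else if i == head k then 1 else 0.

Definition upd {n : nat} (q : 'I_n -> R) (k : 'I_n) (x : R) : 'I_n -> R :=
  fun j => if j == k then x else q j.

Definition vcont_at {n : nat} (F : ('I_n -> R) -> R) (q : 'I_n -> R) : Prop :=
  forall eps, 0 < eps -> exists delta, 0 < delta /\
    forall q', (forall j, Rabs (q' j - q j) < delta) -> Rabs (F q' - F q) < eps.

Definition has_partials {n : nat} (F : ('I_n -> R) -> R)
  (dF : ('I_n -> R) -> 'I_n -> R) : Prop :=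
  forall q k, derivable_pt_lim (fun x => F (upd q k x)) (q k) (dF q k).

Definition C1_with {n : nat} (F : ('I_n -> R) -> R)
  (dF : ('I_n -> R) -> 'I_n -> R) : Prop :=
  has_partials F dF /\ forall k q, vcont_at (fun q' => dF q' k) q.

(** Mdot dM q v = d/dt M(q(t)) when q(t) = q, qdot(t) = v, with
    dM q k a b = d M_{ab} / d q_k (q) *)
Definition Mdot {n : nat} (dM : ('I_n -> R) -> 'I_n -> 'I_n -> 'I_n -> R)
  (q v : 'I_n -> R) : 'I_n -> 'I_n -> R :=
  fun a b => rsum (fun k => dM q k a b * v k).

(** gradient in q of (1/2) v^T M(q) v *)
Definition grad_kin {n : nat} (dM : ('I_n -> R) -> 'I_n -> 'I_n -> 'I_n -> R)
  (q v : 'I_n -> R) : 'I_n -> R :=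
  fun k => / 2 * rsum (fun a => rsum (fun b => v a * dM q k a b * v b)).

Definition rcont_at (f : R -> R) (t0 : R) : Prop :=
  forall eps, 0 < eps -> exists delta, 0 < delta /\
    forall t, t0 <= t < t0 + delta -> Rabs (f t - f t0) < eps.

Definition Mstack {N n : nat} (Mi : 'I_N -> ('I_n -> R) -> 'I_n -> 'I_n -> R)
  (q : 'I_N * 'I_n -> R) : 'I_N * 'I_n -> 'I_N * 'I_n -> R :=
  bdiag (fun i => Mi i (blk q i)).

Definition qtil {N n : nat} (q : 'I_N * 'I_n -> R) (qd : 'I_n -> R) : 'I_N * 'I_n -> R :=
  fun p => q p - qd p.2.

Definition vref {N n : nat} (Pi : 'I_N -> 'I_n -> 'I_n -> R)
  (q : 'I_N * 'I_n -> R) (qd qd1 : 'I_n -> R) : 'I_N * 'I_n -> R :=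
  fun p => qd1 p.2 - mv (bdiag Pi) (qtil q qd) p.

Definition svar {N n : nat} (Pi : 'I_N -> 'I_n -> 'I_n -> R)
  (q v : 'I_N * 'I_n -> R) (qd qd1 : 'I_n -> R) : 'I_N * 'I_n -> R :=
  vsub v (vref Pi q qd qd1).

Definition Pzeta {Mm n : nat} (Kz : 'I_Mm * 'I_n -> 'I_Mm * 'I_n -> R)
  (zd z : 'I_Mm * 'I_n -> R) : R := / 2 * quad Kz (vsub z zd).

Definition Sfun {N Mm n : nat} (Pi : 'I_N -> 'I_n -> 'I_n -> R)
  (Mi : 'I_N -> ('I_n -> R) -> 'I_n -> 'I_n -> R)
  (Kz : 'I_Mm * 'I_n -> 'I_Mm * 'I_n -> R) (zd : 'I_Mm * 'I_n -> R)
  (qt s : 'I_N * 'I_n -> R) (z : 'I_Mm * 'I_n -> R) (q : 'I_N * 'I_n -> R) : R :=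
  / 2 * quad (bdiag Pi) qt + / 2 * quad (Mstack Mi q) s + Pzeta Kz zd z.

Definition Sdot_val {N Mm n : nat} (Pi Ki : 'I_N -> 'I_n -> 'I_n -> R)
  (Kz : 'I_Mm * 'I_n -> 'I_Mm * 'I_n -> R) (zd : 'I_Mm * 'I_n -> R)
  (qt s : 'I_N * 'I_n -> R) (z : 'I_Mm * 'I_n -> R) : R :=
  - quad (mm (bdiag Pi) (bdiag Pi)) qt - quad (bdiag Ki) s
  - quad (mm Kz Kz) (vsub z zd).

(** (q, v, zeta) : [t0, +oo) -> R^{Nn} x R^{Nn} x R^{Mn} is a solution of the
    agent dynamics  qdot_i = v_i,  M_i(q_i) vdot_i + C_i(q_i,v_i) v_i + g_i(q_i) = tau_i
    under the control law
      tau_i = M_i(q_i) vdot_{i,r} + C_i(q_i, qdot_i) v_{i,r} + g_i(q_i) - K_i s_i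
              - Pi_i qtilde_i + u_i,
    edge dynamics  zetadot = mu - dP_zeta/dzeta(zeta) = mu - Kz (zeta - zeta_d),
    interconnection  mu = (B^T (x) I_n) s,  u = -(B (x) I_n) Kz (zeta - zeta_d).
    The equations hold (with two-sided derivatives) for t > t0, and the
    trajectories are right-continuous at t0.  D k is the k-th derivative of q_d
    (D 0 = q_d). vdot, zdot, vrdot are the time derivatives of v, zeta, v_r. *)
Definition cl_solution {N Mm n : nat} (B : 'I_N -> 'I_Mm -> R)
  (Mi : 'I_N -> ('I_n -> R) -> 'I_n -> 'I_n -> R)
  (Ci : 'I_N -> ('I_n -> R) -> ('I_n -> R) -> 'I_n -> 'I_n -> R)
  (gi : 'I_N -> ('I_n -> R) -> 'I_n -> R)
  (Pi Ki : 'I_N -> 'I_n -> 'I_n -> R)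
  (Kz : 'I_Mm * 'I_n -> 'I_Mm * 'I_n -> R) (zd : 'I_Mm * 'I_n -> R)
  (D : nat -> R -> 'I_n -> R) (t0 : R)
  (q v vdot vrdot tau : R -> 'I_N * 'I_n -> R)
  (z zdot : R -> 'I_Mm * 'I_n -> R) : Prop :=
  (forall p, rcont_at (fun t => q t p) t0) /\
  (forall p, rcont_at (fun t => v t p) t0) /\
  (forall e, rcont_at (fun t => z t e) t0) /\
  forall t, t0 < t ->
    let qt := qtil (q t) (D 0%nat t) in
    let vr := vref Pi (q t) (D 0%nat t) (D 1%nat t) in
    let s := svar Pi (q t) (v t) (D 0%nat t) (D 1%nat t) in
    let u := fun p => - mv (@kronI N Mm n B) (mv Kz (vsub (z t) zd)) p in
    let mu := mv (tr (@kronI N Mm n B)) s in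
    (forall p, derivable_pt_lim (fun t' => q t' p) t (v t p)) /\
    (forall p, derivable_pt_lim (fun t' => v t' p) t (vdot t p)) /\
    (forall e, derivable_pt_lim (fun t' => z t' e) t (zdot t e)) /\
    (forall p, derivable_pt_lim
                 (fun t' => vref Pi (q t') (D 0%nat t') (D 1%nat t') p) t (vrdot t p)) /\
    (forall i a,
       tau t (i, a) =
         mv (Mi i (blk (q t) i)) (blk (vrdot t) i) a
       + mv (Ci i (blk (q t) i) (blk (v t) i)) (blk vr i) a
       + gi i (blk (q t) i) a
       - mv (Ki i) (blk s i) a
       - mv (Pi i) (blk qt i) a
       + u (i, a)) /\
    (forall i a,
       mv (Mi i (blk (q t) i)) (blk (vdot t) i) a
       + mv (Ci i (blk (q t) i) (blk (v t) i)) (blk (v t) i) a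
       + gi i (blk (q t) i) a = tau t (i, a)) /\
    (forall e, zdot t e = mu e - mv Kz (vsub (z t) zd) e).

(* Differentiating S along a closed-loop solution, all cross terms cancel: s^T (dM/dt - 2C) s = 0
   by skew-symmetry, the term Pi qt couples the first two equations with opposite signs, and the
   spring force s^T (B (x) I) Kz (zeta - zeta_d) is returned by (zeta - zeta_d)^T Kz (B^T (x) I) s
   (the interconnection is power preserving).  What remains is dS/dt = - qt^T Pi^2 qt - s^T K s
   - (zeta - zeta_d)^T Kz^2 (zeta - zeta_d) <= - k3 |x|^2, whereas S <= k2 / 2 |x|^2 with
   x = (qt, s, zeta - zeta_d); both estimates rest on the fact that the extreme eigenvalues of a
   symmetric matrix bound its quadratic form.  Hence dS/dt <= - beta S, and comparison with
   exp (- beta t) gives the decay of S.  Since S also dominates a positive multiple of |x|^2,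
   |x| decays exponentially at rate beta / 2. *)

From Pilot Require Import Defs.
From mathcomp Require Import ssreflect ssrfun ssrbool eqtype ssrnat seq choice fintype bigop.
From Stdlib Require Import Reals Lra Classical FunctionalExtensionality.
From mathcomp Require Import ssralg matrix Rstruct.
Set Implicit Arguments.
Unset Strict Implicit.
Unset Printing Implicit Defensive.
Local Open Scope R_scope.

(** * Finite sums and quadratic forms *)

Section FiniteSums.
Variable I : finType.
Implicit Types F G : I -> R.

Lemma rsum_ext F G : (forall p, F p = G p) -> rsum F = rsum G.
Proof. by move=> h; rewrite /rsum; apply: eq_bigr => p _; rewrite h. Qed.

Lemma rsum_plus F G : rsum (fun p => F p + G p) = rsum F + rsum G.
Proof. by rewrite /rsum big_split. Qed.

Lemma rsum_scal c F : rsum (fun p => c * F p) = c * rsum F.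
Proof. by rewrite /rsum big_distrr. Qed.

Lemma rsum_scalr c F : rsum (fun p => F p * c) = rsum F * c.
Proof. rewrite Rmult_comm -rsum_scal; apply: rsum_ext => p; ring. Qed.

Lemma rsum0 : rsum (fun _ : I => 0) = 0.
Proof. by rewrite /rsum big1. Qed.

Lemma rsum_opp F : rsum (fun p => - F p) = - rsum F.
Proof.
have -> : - rsum F = (-1) * rsum F by ring.
rewrite -rsum_scal; apply: rsum_ext => p; ring.
Qed.

Lemma rsum_minus F G : rsum (fun p => F p - G p) = rsum F - rsum G.
Proof. by rewrite /Rminus -rsum_opp -rsum_plus. Qed.

Lemma rsum_le F G : (forall p, F p <= G p) -> rsum F <= rsum G.
Proof.
move=> h; rewrite /rsum; apply: (big_ind2 (fun a b => a <= b)) => //; [lra | move=> *; lra].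
Qed.

Lemma rsum_ge0 F : (forall p, 0 <= F p) -> 0 <= rsum F.
Proof. by move=> h; rewrite -rsum0; apply: rsum_le. Qed.

Lemma rsum_delta (c : I -> R) p : rsum (fun r => if r == p then c r else 0) = c p.
Proof. by rewrite /rsum -big_mkcond big_pred1_eq. Qed.

Lemma rsum_term F p : (forall r, 0 <= F r) -> F p <= rsum F.
Proof.
move=> h; rewrite -rsum_delta; apply: rsum_le => r.
case: eqP => [->|_]; [lra | exact: h].
Qed.

Lemma rsum_abs F : Rabs (rsum F) <= rsum (fun p => Rabs (F p)).
Proof.
rewrite /rsum; apply: (big_ind2 (fun a b => Rabs a <= b)) => [||p _]; last lra.
- rewrite Rabs_R0; lra.
- move=> a b c d h1 h2; apply: Rle_trans (Rabs_triang _ _) _; lra.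
Qed.

End FiniteSums.

Lemma rsum_swap {I J : finType} (F : I -> J -> R) :
  rsum (fun p => rsum (fun r => F p r)) = rsum (fun r => rsum (fun p => F p r)).
Proof. exact: exchange_big. Qed.

Lemma rsum_pair {I J : finType} (F : I * J -> R) :
  rsum F = rsum (fun i => rsum (fun a => F (i, a))).
Proof. by rewrite /rsum pair_big; apply: eq_bigr => -[]. Qed.

Lemma sumr_enum_rank {I : finType} (F : 'I_#|I| -> R) :
  (\sum_j F j)%R = rsum (fun p : I => F (enum_rank p)).
Proof. rewrite /rsum (reindex enum_rank) //; apply: onW_bij; exact: enum_rank_bij. Qed.

Section QuadraticForms.
Variable I : finType.
Implicit Types (A C : I -> I -> R) (x y : I -> R).

Definition bil A x y := dot x (mv A y).

Lemma bil_expand A x y : bil A x y = rsum (fun p => rsum (fun r => x p * A p r * y r)).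
Proof.
rewrite /bil /dot /mv; apply: rsum_ext => p; rewrite -rsum_scal.
by apply: rsum_ext => r; ring.
Qed.

Lemma quad_expand A x : quad A x = rsum (fun p => rsum (fun r => x p * A p r * x r)).
Proof. exact: bil_expand. Qed.

Lemma bil_sym A x y : msym A -> bil A x y = bil A y x.
Proof.
move=> hA; rewrite !bil_expand rsum_swap.
by apply: rsum_ext => p; apply: rsum_ext => r; rewrite hA; ring.
Qed.

Lemma dot_sym x y : dot x y = dot y x.
Proof. by apply: rsum_ext => p; ring. Qed.

Lemma mv_sub A x y p : mv A (vsub x y) p = mv A x p - mv A y p.
Proof. by rewrite /mv /vsub -rsum_minus; apply: rsum_ext => r; ring. Qed.

Lemma bil_vsub A x y z :
  bil A x (vsub y z) = bil A x y - bil A x z.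
Proof. by rewrite /bil /dot -rsum_minus; apply: rsum_ext => p; rewrite mv_sub; ring. Qed.

Lemma quad_skew A x : mskew A -> quad A x = 0.
Proof.
move=> hA; suff : quad A x = - quad A x by lra.
rewrite !quad_expand -rsum_opp rsum_swap; apply: rsum_ext => p.
by rewrite -rsum_opp; apply: rsum_ext => r; rewrite hA; ring.
Qed.

Lemma quad_add_scal A x y c : msym A ->
  quad A (fun p => x p + c * y p) = quad A x + 2 * c * bil A x y + c * c * quad A y.
Proof.
move=> hA.
have -> : 2 * c * bil A x y = c * bil A x y + c * bil A y x by rewrite (bil_sym x y hA); ring.
rewrite !quad_expand !bil_expand -!rsum_scal -!rsum_plus; apply: rsum_ext => p.
by rewrite -!rsum_scal -!rsum_plus; apply: rsum_ext => r; ring.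
Qed.

Lemma quad_scal A x c : quad A (fun p => c * x p) = c * c * quad A x.
Proof.
rewrite !quad_expand -!rsum_scal; apply: rsum_ext => p.
by rewrite -!rsum_scal; apply: rsum_ext => r; ring.
Qed.

Lemma quad_eigen A x mu : (forall p, mv A x p = mu * x p) -> quad A x = mu * sqnorm x.
Proof. by move=> h; rewrite /quad /dot -rsum_scal; apply: rsum_ext => p; rewrite h; ring. Qed.

Lemma dot_zero_r x y : ~ Defs.nonzero y -> dot x y = 0.
Proof.
move=> hy; rewrite /dot -(rsum0 I); apply: rsum_ext => p.
have -> : y p = 0 by apply: NNPP => h; apply: hy; exists p.
ring.
Qed.

Lemma quad_zero_vec A x : ~ Defs.nonzero x -> quad A x = 0.
Proof. by move=> hx; rewrite /quad dot_sym; exact: dot_zero_r. Qed.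

Lemma sqnorm_ge0 x : 0 <= sqnorm x.
Proof. by apply: rsum_ge0 => p; nra. Qed.

Lemma sqnorm_scal x c : sqnorm (fun p => c * x p) = c * c * sqnorm x.
Proof. by rewrite /sqnorm /dot -!rsum_scal; apply: rsum_ext => p; ring. Qed.

Lemma sq_le_sqnorm x p : x p * x p <= sqnorm x.
Proof. by apply: (rsum_term (F := fun r => x r * x r)) => r; nra. Qed.

Lemma abs_le_sqrt_sqnorm x p : Rabs (x p) <= sqrt (sqnorm x).
Proof.
rewrite -sqrt_Rsqr_abs; apply: sqrt_le_1_alt; exact: sq_le_sqnorm.
Qed.

Lemma sqnorm_pos x : Defs.nonzero x -> 0 < sqnorm x.
Proof.
move=> [p hp]; have := sq_le_sqnorm x p.
have : 0 < x p * x p by apply: Rsqr_pos_lt.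
lra.
Qed.

Lemma mv_mm A C x p : mv (mm A C) x p = mv A (mv C x) p.
Proof.
rewrite /mv /mm.
transitivity (rsum (fun r => rsum (fun j => A p j * C j r * x r))).
  by apply: rsum_ext => r; rewrite -rsum_scalr; apply: rsum_ext => j; ring.
rewrite rsum_swap; apply: rsum_ext => j; rewrite -rsum_scal; apply: rsum_ext => r; ring.
Qed.

Lemma msym_mm A : msym A -> msym (mm A A).
Proof. by move=> h p r; apply: rsum_ext => j; rewrite (h p j) (h j r); ring. Qed.

Lemma quad_mm_bil A C x : quad (mm A C) x = bil A x (mv C x).
Proof. by apply: rsum_ext => p; rewrite mv_mm. Qed.

Lemma quad_mm A x : msym A -> quad (mm A A) x = sqnorm (mv A x).
Proof. by move=> h; rewrite quad_mm_bil bil_sym. Qed.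

Lemma quad_sub_scal_mx A C c x :
  quad (fun p r => A p r - c * C p r) x = quad A x - c * quad C x.
Proof.
rewrite !quad_expand -rsum_scal -rsum_minus; apply: rsum_ext => p.
by rewrite -rsum_scal -rsum_minus; apply: rsum_ext => r; ring.
Qed.

End QuadraticForms.

Lemma dot_mv_tr {I J : finType} (A : I -> J -> R) x y : dot x (mv (tr A) y) = dot (mv A x) y.
Proof.
rewrite /dot /mv /tr.
transitivity (rsum (fun p => rsum (fun r => x p * A r p * y r))).
  by apply: rsum_ext => p; rewrite -rsum_scal; apply: rsum_ext => r; ring.
rewrite rsum_swap; apply: rsum_ext => r; rewrite -rsum_scalr; apply: rsum_ext => p; ring.
Qed.

Section BlockDiagonal.
Variables N n : nat.
Implicit Types (F : 'I_N -> 'I_n -> 'I_n -> R) (x y : 'I_N * 'I_n -> R).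

Lemma mv_bdiag F x i a : mv (bdiag F) x (i, a) = mv (F i) (blk x i) a.
Proof.
rewrite /mv /bdiag rsum_pair /= -(rsum_delta (fun _ => rsum (fun b => F i a b * x (i, b))) i).
apply: rsum_ext => j /=; rewrite eq_sym; case: (eqVneq j i) => [->|_] //.
rewrite -[RHS](rsum0 'I_n); apply: rsum_ext => b; ring.
Qed.

Lemma dot_pair x y : dot x y = rsum (fun i => dot (blk x i) (blk y i)).
Proof. exact: rsum_pair. Qed.

Lemma quad_bdiag F x : quad (bdiag F) x = rsum (fun i => quad (F i) (blk x i)).
Proof.
rewrite /quad dot_pair; apply: rsum_ext => i.
by apply: rsum_ext => a; rewrite /blk mv_bdiag.
Qed.

Lemma msym_bdiag F : (forall i, msym (F i)) -> msym (bdiag F).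
Proof. by move=> h p r; rewrite /bdiag eq_sym; case: eqP => // ->; rewrite h. Qed.

Lemma spd_bdiag F : (forall i, spd (F i)) -> spd (bdiag F).
Proof.
move=> h; split; first by apply: msym_bdiag => i; exact: (h i).1.
move=> x [[i a] hx]; rewrite quad_bdiag.
have hpos : 0 < quad (F i) (blk x i) by apply: (h i).2; exists a.
apply: Rlt_le_trans hpos (rsum_term _ _) => j.
case: (classic (Defs.nonzero (blk x j))) => hj.
- by apply: Rlt_le; apply: (h j).2.
- by rewrite quad_zero_vec //; lra.
Qed.

End BlockDiagonal.

(** * Extreme eigenvalues of symmetric matrices *)

Section Spectral.
Variable I : finType.
Implicit Types (A P Q : I -> I -> R) (x y : I -> R).

Definition mx_of A : 'M[R]_#|I| := (\matrix_(i, j) A (enum_val i) (enum_val j))%R.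

Lemma kernel_of_det0 P :
  (\det (mx_of P))%R = 0 -> exists x, Defs.nonzero x /\ forall p, mv P x p = 0.
Proof.
move=> h0; have /det0P [v vn0 vP] : (\det (mx_of P)^T == 0)%R by rewrite det_tr h0.
exists (fun p => v ord0 (enum_rank p)); split.
- apply: NNPP => hn; apply: (negP vn0); apply/eqP/rowP => j; rewrite mxE.
  by apply: NNPP => hj; apply: hn; exists (enum_val j); rewrite enum_valK.
- move=> r; have := congr1 (fun M : 'rV[R]_#|I| => M ord0 (enum_rank r)) vP.
  rewrite !mxE sumr_enum_rank => e; rewrite -[RHS]e.
  by apply: rsum_ext => p; rewrite !mxE !enum_rankK Rmult_comm.
Qed.

Lemma inverse_of_unitmx P : mx_of P \in unitmx ->
  exists Q, forall x p, x p = mv Q (mv P x) p.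
Proof.
move=> hu; exists (fun p r => invmx (mx_of P) (enum_rank p) (enum_rank r)) => x p.
pose X : 'cV[R]_#|I| := (\col_i x (enum_val i))%R.
have hPX j : (mx_of P *m X)%R j ord0 = mv P x (enum_val j).
  by rewrite mxE sumr_enum_rank; apply: rsum_ext => r; rewrite !mxE enum_rankK.
have := congr1 (fun M : 'cV[R]_#|I| => M (enum_rank p) ord0) (mulKmx hu X).
rewrite [RHS]mxE enum_rankK => <-; rewrite mxE sumr_enum_rank.
by apply: rsum_ext => r; rewrite hPX enum_rankK.
Qed.

Lemma quad_bounded A : exists C, 0 < C /\ forall x, Rabs (quad A x) <= C * sqnorm x.
Proof.
pose C := rsum (fun p => rsum (fun r => Rabs (A p r))).
have C0 : 0 <= C by apply: rsum_ge0 => p; apply: rsum_ge0 => r; exact: Rabs_pos.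
exists (C + 1); split => [|x]; first lra.
have hs := sqnorm_ge0 x.
suff : Rabs (quad A x) <= C * sqnorm x by nra.
rewrite quad_expand /C -rsum_scalr; apply: Rle_trans (rsum_abs _) _; apply: rsum_le => p.
apply: Rle_trans (rsum_abs _) _; rewrite -rsum_scalr; apply: rsum_le => r.
have hxx : Rabs (x p) * Rabs (x r) <= sqnorm x.
  rewrite -(sqrt_sqrt _ hs); apply: Rmult_le_compat; try exact: Rabs_pos;
  exact: abs_le_sqrt_sqnorm.
rewrite !Rabs_mult; have := Rabs_pos (A p r); have := Rabs_pos (x p); nra.
Qed.

Lemma mv_bounded A : exists C, 0 <= C /\ forall x, sqnorm (mv A x) <= C * sqnorm x.
Proof.
pose a p := rsum (fun r => Rabs (A p r)).
exists (rsum (fun p => a p * a p)); split => [|x]; first by apply: rsum_ge0 => p; nra.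
rewrite -rsum_scalr.
apply: rsum_le => p; set s := sqnorm x.
have hs : 0 <= s := sqnorm_ge0 x.
have ha : 0 <= a p by apply: rsum_ge0 => r; exact: Rabs_pos.
have hb : Rabs (mv A x p) <= a p * sqrt s.
  rewrite /a -rsum_scalr; apply: Rle_trans (rsum_abs _) _; apply: rsum_le => r.
  rewrite Rabs_mult; apply: Rmult_le_compat_l; [exact: Rabs_pos | exact: abs_le_sqrt_sqnorm].
have hsq : mv A x p * mv A x p = Rabs (mv A x p) * Rabs (mv A x p).
  by rewrite -Rabs_mult Rabs_right //; apply: Rle_ge; nra.
rewrite hsq -(sqrt_sqrt _ hs); have := Rabs_pos (mv A x p); have := sqrt_pos s; nra.
Qed.

Lemma psd_sqnorm_mv_le P : msym P -> (forall x, 0 <= quad P x) ->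
  exists C, 0 < C /\ forall x, sqnorm (mv P x) <= C * quad P x.
Proof.
move=> hP psd; have [C [C0 hC]] := quad_bounded P.
exists C; split => // x; set w := mv P x.
(* positivity of [P] at [x - w / C] *)
have h := psd (fun p => x p + (- / C) * w p); rewrite quad_add_scal // in h.
have e : bil P x w = sqnorm w by rewrite bil_sym.
rewrite e in h.
have hw : quad P w <= C * sqnorm w by have := Rle_abs (quad P w); have := hC w; lra.
have hi : 0 < / C by apply: Rinv_0_lt_compat.
have hw' : - / C * - / C * quad P w <= / C * sqnorm w.
  have -> : / C * sqnorm w = / C * / C * (C * sqnorm w) by field; lra.
  have -> : - / C * - / C = / C * / C by ring.
  by apply: Rmult_le_compat_l hw; nra.
have -> : sqnorm w = C * (/ C * sqnorm w) by field; lra.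
apply: Rmult_le_compat_l; lra.
Qed.

Lemma psd_kernel_or_coercive P : msym P -> (forall x, 0 <= quad P x) ->
  (exists x, Defs.nonzero x /\ forall p, mv P x p = 0) \/
  (exists c, 0 < c /\ forall x, c * sqnorm x <= quad P x).
Proof.
move=> hP psd; case: (Req_dec (\det (mx_of P))%R 0) => [h0|hdet].
  by left; exact: kernel_of_det0.
right; have hu : mx_of P \in unitmx by rewrite unitmxE GRing.unitfE; apply/eqP.
have [Q hQ] := inverse_of_unitmx hu.
have [C1 [C10 hC1]] := mv_bounded Q.
have [C2 [C20 hC2]] := psd_sqnorm_mv_le hP psd.
exists (/ (C1 * C2 + 1)); split; first by apply: Rinv_0_lt_compat; nra.
move=> x; have ex : x = mv Q (mv P x) by apply: functional_extensionality; exact: hQ.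
have h1 : sqnorm x <= C1 * C2 * quad P x.
  rewrite {1}ex Rmult_assoc; apply: Rle_trans (hC1 _) _.
  by apply: Rmult_le_compat_l => //; apply: hC2.
have := psd x; have := sqnorm_ge0 x => h2 h3.
apply: (Rmult_le_reg_l (C1 * C2 + 1)); first nra.
rewrite -Rmult_assoc Rinv_r; nra.
Qed.

Lemma rayleigh_sup A (p0 : I) : exists l, (forall x, quad A x <= l * sqnorm x) /\
  forall c, c < l -> exists x, sqnorm x = 1 /\ c < quad A x.
Proof.
pose E r := exists x, sqnorm x = 1 /\ r = quad A x.
have bE : bound E.
  have [C [_ hC]] := quad_bounded A.
  by exists C => _ [x [h1 ->]]; have := hC x; have := Rle_abs (quad A x); rewrite h1; lra.
have nE : exists r, E r.
  pose e0 r : R := if r == p0 then 1 else 0.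
  exists (quad A e0), e0; split => //; rewrite -(rsum_delta (fun _ => 1) p0).
  by apply: rsum_ext => r; rewrite /e0; case: eqP => _; ring.
have [l [ub lub]] := completeness E bE nE.
exists l; split => [x | c hc].
- case: (sqnorm_ge0 x) => hs; last first.
    have [C [_ hC]] := quad_bounded A.
    by have := hC x; have := Rle_abs (quad A x); rewrite -hs; lra.
  pose k := / sqrt (sqnorm x).
  have hk : k * k = / sqnorm x.
    by rewrite /k -Rinv_mult sqrt_sqrt //; lra.
  have := ub _ (ex_intro _ (fun p => k * x p) (conj _ erefl)).
  rewrite sqnorm_scal quad_scal hk => /(_ ltac:(field; lra)) h.
  have -> : quad A x = sqnorm x * (/ sqnorm x * quad A x) by field; lra.
  rewrite Rmult_comm; apply: Rmult_le_compat_r; lra.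
- apply: NNPP => hn; suff : l <= c by lra.
  apply: lub => _ [x [h1 ->]]; apply: Rnot_lt_le => hlt; apply: hn; exists x; split => //.
Qed.

Lemma rayleigh A (p0 : I) : msym A ->
  exists l, eigenvalue A l /\ forall x, quad A x <= l * sqnorm x.
Proof.
(* With l the supremum of the Rayleigh quotient, [l - A] is positive semidefinite but not
   coercive, so it has a kernel: an eigenvector for l. *)
move=> hA; have [l [hl hsup]] := rayleigh_sup A p0.
exists l; split => //.
pose P p r := (if p == r then l else 0) - A p r.
have mvP x r : mv P x r = l * x r - mv A x r.
  rewrite /mv -(rsum_delta (fun p => l * x p) r) -rsum_minus.
  by apply: rsum_ext => p; rewrite /P eq_sym; case: eqP => _; ring.
have quadP x : quad P x = l * sqnorm x - quad A x.
  rewrite /quad /sqnorm /dot -rsum_scal -rsum_minus.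
  by apply: rsum_ext => p; rewrite mvP; ring.
have hP : msym P by move=> p r; rewrite /P hA eq_sym.
have psd x : 0 <= quad P x by rewrite quadP; have := hl x; lra.
case: (psd_kernel_or_coercive hP psd) => [[x [hx hker]] | [c [hc hcoer]]].
- by exists x; split => // r; have := hker r; rewrite mvP; lra.
- have [x [h1 hx]] := hsup (l - c) ltac:(lra).
  by have := hcoer x; rewrite quadP h1; lra.
Qed.

Lemma rayleigh_min A (p0 : I) : msym A ->
  exists m, eigenvalue A m /\ forall x, m * sqnorm x <= quad A x.
Proof.
move=> hA; have hA' : msym (fun p r => - A p r) by move=> p r; rewrite hA.
have [l [[x [hx hxl]] hb]] := rayleigh p0 hA'.
have quadN y : quad (fun p r => - A p r) y = - quad A y.
  rewrite !quad_expand -rsum_opp; apply: rsum_ext => p.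
  by rewrite -rsum_opp; apply: rsum_ext => r; ring.
exists (- l); split => [|y]; last by have := hb y; rewrite quadN; lra.
exists x; split => // p; have := hxl p.
have -> : mv (fun p r => - A p r) x p = - mv A x p.
  by rewrite /mv -rsum_opp; apply: rsum_ext => r; ring.
lra.
Qed.

End Spectral.

Section Eigenvalues.
Variable I : finType.
Implicit Types (A : I -> I -> R) (x : I -> R).

Lemma lambda_max_quad_le A l : msym A -> is_lambda_max A l ->
  forall x, quad A x <= l * sqnorm x.
Proof.
move=> hA [[y [[p0 _] _]] hmax] x; have [m [hm hb]] := rayleigh p0 hA.
have := hmax _ hm; have := hb x; have := sqnorm_ge0 x; nra.
Qed.

Lemma lambda_min_quad_ge A l : msym A -> is_lambda_min A l ->
  forall x, l * sqnorm x <= quad A x.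
Proof.
move=> hA [[y [[p0 _] _]] hmin] x; have [m [hm hb]] := rayleigh_min p0 hA.
have := hmin _ hm; have := hb x; have := sqnorm_ge0 x; nra.
Qed.

Lemma lambda_max_exists A (p0 : I) : msym A -> exists l, is_lambda_max A l.
Proof.
move=> hA; have [l [hl hb]] := rayleigh p0 hA.
exists l; split => // mu [y [hy hmu]].
have := hb y; rewrite (quad_eigen hmu); have := sqnorm_pos hy; nra.
Qed.

Lemma spd_eigenvalue_pos A mu : spd A -> eigenvalue A mu -> 0 < mu.
Proof.
move=> [_ hA] [y [hy hmu]]; have := hA y hy; rewrite (quad_eigen hmu).
have := sqnorm_pos hy; nra.
Qed.

Lemma spd_coercive A (p0 : I) : spd A ->
  exists c, 0 < c /\ forall x, c * sqnorm x <= quad A x.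
Proof.
move=> hA; have [m [hm hb]] := rayleigh_min p0 hA.1.
by exists m; split => //; exact: spd_eigenvalue_pos hm.
Qed.

Lemma spd_mm A : spd A -> spd (mm A A).
Proof.
move=> [hs hp]; split; first exact: msym_mm.
move=> x hx; rewrite quad_mm //; apply: sqnorm_pos.
apply: NNPP => hn; have := hp x hx.
by rewrite /quad dot_zero_r //; lra.
Qed.

End Eigenvalues.

(** * Differential calculus *)

Lemma derivable_pt_lim_rsum {I : finType} (f : I -> R -> R) (df : I -> R) t :
  (forall p, derivable_pt_lim (f p) t (df p)) ->
  derivable_pt_lim (fun u => rsum (fun p => f p u)) t (rsum df).
Proof.
rewrite /rsum => h; elim: (index_enum I) => [|p s IH].
  apply: (derivable_pt_lim_ext (fun _ => 0)) => [u|]; first by rewrite big_nil.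
  by rewrite big_nil; exact: derivable_pt_lim_const.
apply: (derivable_pt_lim_ext (fun u => f p u + \big[Rplus/0]_(q <- s) f q u)) => [u|].
  by rewrite big_cons.
by rewrite big_cons; apply: derivable_pt_lim_plus.
Qed.

Lemma derivable_pt_lim_half_quad {I : finType} (A : R -> I -> I -> R) dA
    (x : R -> I -> R) dx t :
  msym (A t) ->
  (forall p r, derivable_pt_lim (fun u => A u p r) t (dA p r)) ->
  (forall p, derivable_pt_lim (fun u => x u p) t (dx p)) ->
  derivable_pt_lim (fun u => / 2 * quad (A u) (x u)) t
    (bil (A t) (x t) dx + / 2 * quad dA (x t)).
Proof.
move=> hsym hA hx.
apply: (derivable_pt_lim_ext
  (fun u => / 2 * rsum (fun p => rsum (fun r => x u p * A u p r * x u r)))) => [u|].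
  by rewrite quad_expand.
have -> : bil (A t) (x t) dx + / 2 * quad dA (x t) =
          / 2 * (bil (A t) dx (x t) + quad dA (x t) + bil (A t) (x t) dx).
  by rewrite (bil_sym dx (x t) hsym); field.
apply: derivable_pt_lim_scal.
rewrite !bil_expand quad_expand -!rsum_plus.
apply: derivable_pt_lim_rsum => p; rewrite -!rsum_plus; apply: derivable_pt_lim_rsum => r.
set l := (X in derivable_pt_lim _ _ X).
have -> : l = (dx p * A t p r + x t p * dA p r) * x t r + x t p * A t p r * dx r.
  by rewrite /l; ring.
exact: (derivable_pt_lim_mult _ _ _ _ _ (derivable_pt_lim_mult _ _ _ _ _ (hx p) (hA p r)) (hx r)).
Qed.

Lemma derivable_pt_lim_half_quad_const {I : finType} (A : I -> I -> R) (x : R -> I -> R) dx t :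
  msym A -> (forall p, derivable_pt_lim (fun u => x u p) t (dx p)) ->
  derivable_pt_lim (fun u => / 2 * quad A (x u)) t (bil A (x t) dx).
Proof.
move=> hA hx.
have := derivable_pt_lim_half_quad (A := fun _ => A) (dA := fun _ _ => 0) hA
  (fun p r => derivable_pt_lim_const _ t) hx.
have -> : quad (fun _ _ => 0) (x t) = 0.
  rewrite quad_expand -[RHS](rsum0 I); apply: rsum_ext => p.
  by rewrite -[RHS](rsum0 I); apply: rsum_ext => r; ring.
by rewrite Rmult_0_r Rplus_0_r.
Qed.

Lemma rcont_at_limit f t0 : rcont_at f t0 <-> limit1_in f (fun u => t0 <= u) (f t0) t0.
Proof.
split => h eps he; have [d [hd hh]] := h eps he; exists d; split => // x.
- move=> [hx1]; rewrite /= /R_dist => hx2; apply: hh.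
  by have := Rle_abs (x - t0); lra.
- move=> hx; apply: hh; split; first lra.
  by rewrite /= /R_dist Rabs_right; lra.
Qed.

Lemma rcont_at_ext f g t0 : (forall u, f u = g u) -> rcont_at f t0 -> rcont_at g t0.
Proof. by move=> h; rewrite (functional_extensionality f g h). Qed.

Lemma rcont_at_const c t0 : rcont_at (fun _ => c) t0.
Proof. by apply/rcont_at_limit; exact: (limit_free (fun _ => c)). Qed.

Lemma rcont_at_plus f g t0 :
  rcont_at f t0 -> rcont_at g t0 -> rcont_at (fun u => f u + g u) t0.
Proof. by rewrite !rcont_at_limit; exact: limit_plus. Qed.

Lemma rcont_at_minus f g t0 :
  rcont_at f t0 -> rcont_at g t0 -> rcont_at (fun u => f u - g u) t0.
Proof. by rewrite !rcont_at_limit; exact: limit_minus. Qed.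

Lemma rcont_at_mult f g t0 :
  rcont_at f t0 -> rcont_at g t0 -> rcont_at (fun u => f u * g u) t0.
Proof. by rewrite !rcont_at_limit; exact: limit_mul. Qed.

Lemma rcont_at_rsum {I : finType} (f : I -> R -> R) t0 :
  (forall p, rcont_at (f p) t0) -> rcont_at (fun u => rsum (fun p => f p u)) t0.
Proof.
rewrite /rsum => h; elim: (index_enum I) => [|p s IH].
  by apply: (rcont_at_ext (f := fun _ => 0)) => [u|]; [rewrite big_nil | exact: rcont_at_const].
apply: (rcont_at_ext (f := fun u => f p u + \big[Rplus/0]_(q <- s) f q u)) => [u|].
  by rewrite big_cons.
exact: rcont_at_plus.
Qed.

Lemma rcont_at_derivable f t0 l : derivable_pt_lim f t0 l -> rcont_at f t0.
Proof.
move=> h eps he.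
have hc : continuity_pt f t0 by apply: derivable_continuous_pt; exists l.
have [d [hd hh]] := hc eps he.
exists d; split => // t [h1 h2].
case: (Req_dec t t0) => [->|hne]; first by rewrite Rminus_diag Rabs_R0.
apply: (hh t); split; first by split => //; apply: not_eq_sym.
by rewrite /= /R_dist Rabs_right; lra.
Qed.

Lemma rcont_at_quad {I : finType} (A : R -> I -> I -> R) (x : R -> I -> R) t0 :
  (forall p r, rcont_at (fun u => A u p r) t0) ->
  (forall p, rcont_at (fun u => x u p) t0) ->
  rcont_at (fun u => quad (A u) (x u)) t0.
Proof.
move=> hA hx.
apply: (rcont_at_ext (f := fun u => rsum (fun p => rsum (fun r => x u p * A u p r * x u r))))
  => [u|]; first by rewrite quad_expand.
apply: rcont_at_rsum => p; apply: rcont_at_rsum => r.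
by apply: rcont_at_mult; [apply: rcont_at_mult|].
Qed.

Lemma common_delta {I : finType} (P : I -> R -> Prop) :
  (forall i d d', 0 < d' <= d -> P i d -> P i d') ->
  (forall i, exists d, 0 < d /\ P i d) -> exists d, 0 < d /\ forall i, P i d.
Proof.
move=> hm h.
suff [d [hd hh]] : exists d, 0 < d /\ forall i, i \in enum I -> P i d.
  by exists d; split => // i; apply: hh; rewrite mem_enum.
elim: (enum I) => [|a s [d [hd hh]]]; first by exists 1; split => //; lra.
have [d' [hd' hh']] := h a.
exists (Rmin d d'); split => [|i]; first exact: Rmin_pos.
have hmin : 0 < Rmin d d' by exact: Rmin_pos.
rewrite inE => /orP [/eqP ->|hi].
- by apply: hm hh'; split => //; exact: Rmin_r.
- by apply: hm (hh i hi); split => //; exact: Rmin_l.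
Qed.

Lemma mvt_between f f' a b : (forall c, derivable_pt_lim f c (f' c)) ->
  exists c, Rabs (c - a) <= Rabs (b - a) /\ f b - f a = f' c * (b - a).
Proof.
move=> hf; case: (Rtotal_order a b) => [hab|[<-|hba]].
- have [c [e hc]] := MVT_cor2 f f' a b hab (fun c _ => hf c).
  by exists c; split => //; rewrite !Rabs_right; lra.
- by exists a; split; [lra | ring].
- have [c [e hc]] := MVT_cor2 f f' b a hba (fun c _ => hf c).
  by exists c; split; [rewrite !Rabs_left; lra | lra].
Qed.

Section PartialsMeanValue.
Variable n : nat.
Variables (F : ('I_n -> R) -> R) (dF : ('I_n -> R) -> 'I_n -> R).
Hypothesis hF : has_partials F dF.

Definition coord_path (y z : 'I_n -> R) (m : nat) : 'I_n -> R :=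
  fun k => if (k < m)%nat then z k else y k.

Lemma coord_path_step (y z : 'I_n -> R) (j : 'I_n) :
  exists xi : 'I_n -> R, (forall k, Rabs (xi k - y k) <= Rabs (z k - y k)) /\
    F (coord_path y z j.+1) - F (coord_path y z j) = dF xi j * (z j - y j).
Proof.
set w := coord_path y z j.
have wj : w j = y j by rewrite /w /coord_path ltnn.
have hd c : derivable_pt_lim (fun x => F (upd w j x)) c (dF (upd w j c) j).
  have := hF (upd w j c) j; rewrite /upd eqxx.
  by apply: derivable_pt_lim_ext => x; congr F; apply: functional_extensionality => k;
    case: eqP.
have [c [hc e]] := mvt_between (y j) (z j) hd.
exists (upd w j c); split.
- move=> k; rewrite /upd; case: eqP => [->|_]; first exact: hc.
  rewrite /w /coord_path; case: ifP => _; first lra.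
  by rewrite Rminus_diag Rabs_R0; exact: Rabs_pos.
- have -> : coord_path y z j.+1 = upd w j (z j).
    apply: functional_extensionality => k; rewrite /upd /w /coord_path ltnS leq_eqVlt.
    case: (eqVneq k j) => [->|hne] /=; first by rewrite eqxx.
    have hne' : (nat_of_ord k == nat_of_ord j) = false by exact: negbTE hne.
    by rewrite hne'.
  have -> : F w = F (upd w j (y j)).
    by congr F; apply: functional_extensionality => k; rewrite /upd; case: eqP => [->|].
  exact: e.
Qed.

Lemma partials_mean_value (y z : 'I_n -> R) :
  exists xi : 'I_n -> 'I_n -> R, (forall j k, Rabs (xi j k - y k) <= Rabs (z k - y k)) /\
    F z - F y = rsum (fun j => dF (xi j) j * (z j - y j)).
Proof.
have [xi hxi] := fin_all_exists (coord_path_step y z).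
exists xi; split => [j|]; first exact: (hxi j).1.
have tele (g : nat -> R) m : \big[Rplus/0]_(j < m) (g j.+1 - g j) = g m - g O.
  elim: m => [|m IH]; first by rewrite big_ord0; ring.
  by rewrite big_ord_recr /= IH; ring.
have -> : F z = F (coord_path y z n).
  by congr F; apply: functional_extensionality => k; rewrite /coord_path ltn_ord.
have -> : F y = F (coord_path y z 0) by congr F; apply: functional_extensionality.
rewrite -(tele (fun m => F (coord_path y z m))).
by apply: rsum_ext => j; rewrite (hxi j).2.
Qed.

End PartialsMeanValue.

Lemma C1_first_order {n : nat} (F : ('I_n -> R) -> R) dF x eps :
  C1_with F dF -> 0 < eps -> exists delta, 0 < delta /\ forall y,
    (forall k, Rabs (y k - x k) < delta) ->
    Rabs (F y - F x - rsum (fun k => dF x k * (y k - x k))) <=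
      eps * rsum (fun k => Rabs (y k - x k)).
Proof.
move=> [hp hc] he.
have [d [hd hh]] := common_delta (P := fun k d => forall y, (forall j, Rabs (y j - x j) < d) ->
                                  Rabs (dF y k - dF x k) < eps)
  (fun k d d' hdd h y hy => h y (fun j => Rlt_le_trans _ _ _ (hy j) (proj2 hdd)))
  (fun k => hc k x eps he).
exists d; split => // y hy.
have [xi [hxi ->]] := partials_mean_value hp x y.
rewrite -rsum_minus -rsum_scal; apply: Rle_trans (rsum_abs _) _; apply: rsum_le => k.
rewrite -Rmult_minus_distr_r Rabs_mult; apply: Rmult_le_compat_r; first exact: Rabs_pos.
by apply: Rlt_le; apply: hh => j; apply: Rle_lt_trans (hxi k j) (hy j).
Qed.

Lemma C1_vcont {n : nat} (F : ('I_n -> R) -> R) dF x : C1_with F dF -> vcont_at F x.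
Proof.
move=> hF eps he; have [d [hd hh]] := C1_first_order x hF Rlt_0_1.
pose A := rsum (fun k => Rabs (dF x k) + 1).
have A0 : 0 <= A by apply: rsum_ge0 => k; have := Rabs_pos (dF x k); lra.
have heta : 0 < Rmin d (eps / (A + 1)) by apply: Rmin_pos => //; apply: Rdiv_lt_0_compat; lra.
exists (Rmin d (eps / (A + 1))); split => // y hy.
set L := rsum (fun k => dF x k * (y k - x k)).
have h1 : Rabs (F y - F x - L) <= 1 * rsum (fun k => Rabs (y k - x k)).
  by apply: hh => k; apply: Rlt_le_trans (hy k) (Rmin_l _ _).
have h2 : Rabs L + 1 * rsum (fun k => Rabs (y k - x k)) <= A * (eps / (A + 1)).
  apply: Rle_trans (Rplus_le_compat_r _ _ _ (rsum_abs _)) _.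
  rewrite Rmult_1_l -rsum_plus /A -rsum_scalr; apply: rsum_le => k.
  have := Rlt_le_trans _ _ _ (hy k) (Rmin_r _ _); set e := eps / (A + 1) => hk.
  rewrite Rabs_mult; have := Rabs_pos (dF x k); nra.
have h3 : A * (eps / (A + 1)) < eps.
  apply: (Rmult_lt_reg_r (A + 1)); first lra.
  have -> : A * (eps / (A + 1)) * (A + 1) = A * eps by field; lra.
  lra.
have -> : F y - F x = (F y - F x - L) + L by ring.
apply: Rle_lt_trans (Rabs_triang _ _) _; lra.
Qed.

Lemma rcont_at_vcont_comp {n : nat} (F : ('I_n -> R) -> R) (c : R -> 'I_n -> R) t0 :
  vcont_at F (c t0) -> (forall k, rcont_at (fun u => c u k) t0) ->
  rcont_at (fun u => F (c u)) t0.
Proof.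
move=> hF hc eps he; have [eta [heta hh]] := hF eps he.
have [d [hd hd']] := common_delta
  (P := fun k d => forall u, t0 <= u < t0 + d -> Rabs (c u k - c t0 k) < eta)
  (fun k d d' hdd h u hu => h u ltac:(lra)) (fun k => hc k eta heta).
by exists d; split => // u hu; apply: hh => k; apply: hd'.
Qed.

Lemma derivable_pt_lim_lipschitz f t l : derivable_pt_lim f t l ->
  exists d, 0 < d /\ forall h, Rabs h < d -> Rabs (f (t + h) - f t) <= (Rabs l + 1) * Rabs h.
Proof.
move=> hf; have [d hd] := hf 1 Rlt_0_1.
exists d; split => [|h hh]; first exact: cond_pos.
case: (Req_dec h 0) => [->|h0].
  by rewrite Rplus_0_r Rminus_diag !Rabs_R0; lra.
have habs : 0 < Rabs h by apply: Rabs_pos_lt.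
have hq := hd h h0 hh.
have e : f (t + h) - f t = ((f (t + h) - f t) / h - l) * h + l * h by field.
rewrite e; apply: Rle_trans (Rabs_triang _ _) _; rewrite !Rabs_mult; nra.
Qed.

Lemma derivable_pt_lim_approx f g t l : derivable_pt_lim g t l ->
  (forall eps, 0 < eps -> exists d, 0 < d /\ forall h, Rabs h < d ->
     Rabs (f (t + h) - f t - (g (t + h) - g t)) <= eps * Rabs h) ->
  derivable_pt_lim f t l.
Proof.
move=> hg hfg eps he.
have he2 : 0 < eps / 2 by lra.
have [dg hdg] := hg _ he2; have [d [hd hh]] := hfg _ he2.
have hmin : 0 < Rmin dg d by apply: Rmin_pos => //; exact: cond_pos.
exists (mkposreal _ hmin) => h h0 /= hlt.
have habs : 0 < Rabs h by apply: Rabs_pos_lt.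
have h1 := hdg h h0 (Rlt_le_trans _ _ _ hlt (Rmin_l _ _)).
have h2 := hh h (Rlt_le_trans _ _ _ hlt (Rmin_r _ _)).
have e : (f (t + h) - f t) / h - l =
         (f (t + h) - f t - (g (t + h) - g t)) * / h + ((g (t + h) - g t) / h - l) by field.
rewrite e; apply: Rle_lt_trans (Rabs_triang _ _) _.
rewrite Rabs_mult Rabs_inv.
have : Rabs (f (t + h) - f t - (g (t + h) - g t)) * / Rabs h <= eps / 2.
  apply: (Rmult_le_reg_r (Rabs h)) => //.
  by rewrite Rmult_assoc Rinv_l; lra.
lra.
Qed.

Lemma C1_chain {n : nat} (F : ('I_n -> R) -> R) dF (c : R -> 'I_n -> R) dc t :
  C1_with F dF -> (forall k, derivable_pt_lim (fun u => c u k) t (dc k)) ->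
  derivable_pt_lim (fun u => F (c u)) t (rsum (fun k => dF (c t) k * dc k)).
Proof.
move=> hF hc; set x := c t.
apply: (derivable_pt_lim_approx (g := fun u => rsum (fun k => dF x k * c u k))).
  by apply: derivable_pt_lim_rsum => k; apply: derivable_pt_lim_scal.
move=> eps he.
pose B := rsum (fun k => Rabs (dc k) + 1).
have hB k : Rabs (dc k) + 1 <= B.
  by apply: (rsum_term (F := fun k => Rabs (dc k) + 1)) => j; have := Rabs_pos (dc j); lra.
have B0 : 0 <= B by apply: rsum_ge0 => k; have := Rabs_pos (dc k); lra.
have he' : 0 < eps / (B + 1) by apply: Rdiv_lt_0_compat; lra.
have [d1 [hd1 hfo]] := C1_first_order x hF he'.
have [d2 [hd2 hlip]] := common_delta (P := fun k d => forall h, Rabs h < d ->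
    Rabs (c (t + h) k - c t k) <= (Rabs (dc k) + 1) * Rabs h)
  (fun k d d' hdd hh h hlt => hh h ltac:(lra)) (fun k => derivable_pt_lim_lipschitz (hc k)).
have hd3 : 0 < d1 / (B + 1) by apply: Rdiv_lt_0_compat; lra.
exists (Rmin d2 (d1 / (B + 1))); split => [|h hh]; first exact: Rmin_pos.
have hD k : Rabs (c (t + h) k - x k) <= (Rabs (dc k) + 1) * Rabs h.
  by apply: hlip; apply: Rlt_le_trans hh (Rmin_l _ _).
have hh3 : (B + 1) * Rabs h < d1.
  have h' := Rlt_le_trans _ _ _ hh (Rmin_r _ _).
  have -> : d1 = (B + 1) * (d1 / (B + 1)) by field; lra.
  by apply: Rmult_lt_compat_l; lra.
have hsmall k : Rabs (c (t + h) k - x k) < d1.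
  by apply: Rle_lt_trans (hD k) _; have := hB k; have := Rabs_pos h; nra.
have hsum : rsum (fun k => Rabs (c (t + h) k - x k)) <= B * Rabs h.
  by rewrite /B -rsum_scalr; apply: rsum_le.
have -> : F (c (t + h)) - F x
      - (rsum (fun k => dF x k * c (t + h) k) - rsum (fun k => dF x k * c t k))
    = F (c (t + h)) - F x - rsum (fun k => dF x k * (c (t + h) k - x k)).
  by rewrite -rsum_minus; congr (_ - _); apply: rsum_ext => k; rewrite /x; ring.
apply: Rle_trans (hfo _ hsmall) _.
apply: Rle_trans (Rmult_le_compat_l _ _ _ (Rlt_le _ _ he') hsum) _.
have -> : eps / (B + 1) * (B * Rabs h) = eps * Rabs h * (B / (B + 1)) by field; lra.
have : B / (B + 1) <= 1 by apply: (Rmult_le_reg_r (B + 1)); [lra | field_simplify; lra].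
have := Rabs_pos h; have := Rmult_le_pos _ _ (Rlt_le _ _ he) (Rabs_pos h); nra.
Qed.

Lemma rcont_nonincreasing_le f t0 : rcont_at f t0 ->
  (forall a b, t0 < a <= b -> f b <= f a) -> forall t, t0 <= t -> f t <= f t0.
Proof.
move=> hc hmono t [ht|<-]; last lra.
apply: Rnot_lt_le => hlt.
have [d [hd hdd]] := hc (f t - f t0) ltac:(lra).
pose a := t0 + Rmin d (t - t0) / 2.
have hm : 0 < Rmin d (t - t0) by apply: Rmin_pos; lra.
have := Rmin_l d (t - t0); have := Rmin_r d (t - t0) => h1 h2.
have := hdd a ltac:(rewrite /a; lra); have := hmono a t ltac:(rewrite /a; lra).
have := Rle_abs (f a - f t0); lra.
Qed.

Lemma exp_decay_of_deriv_le (S Sd : R -> R) t0 beta : rcont_at S t0 ->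
  (forall t, t0 < t -> derivable_pt_lim S t (Sd t) /\ Sd t <= - beta * S t) ->
  forall t, t0 <= t -> S t <= exp (- beta * (t - t0)) * S t0.
Proof.
move=> hc hd t ht.
(* exp (beta (u - t0)) S u is nonincreasing *)
pose E u := exp (beta * (u - t0)).
have dE u : derivable_pt_lim E u (E u * beta).
  have hlin : derivable_pt_lim (fun u => beta * (u - t0)) u beta.
    have := derivable_pt_lim_scal _ beta _ _
      (derivable_pt_lim_minus _ _ _ _ _ (derivable_pt_lim_id u) (derivable_pt_lim_const t0 u)).
    by rewrite Rminus_0_r Rmult_1_r.
  exact: (derivable_pt_lim_comp _ exp _ _ _ hlin (derivable_pt_lim_exp _)).
have hmono a b : t0 < a <= b -> E b * S b <= E a * S a.
  move=> [ha [hab|<-]]; last lra.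
  have [c [e hc']] := MVT_cor2 (fun u => E u * S u) (fun u => E u * beta * S u + E u * Sd u) a b hab
    (fun c hc' => derivable_pt_lim_mult _ _ _ _ _ (dE c) (proj1 (hd c ltac:(lra)))).
  have := proj2 (hd c ltac:(lra)); have := exp_pos (beta * (c - t0)); rewrite -/(E c) => hEc hSd.
  have : E c * beta * S c + E c * Sd c <= 0 by nra.
  by nra.
have hE0 : E t0 = 1 by rewrite /E Rminus_diag Rmult_0_r exp_0.
have := rcont_nonincreasing_le (rcont_at_mult (rcont_at_derivable (dE t0)) hc) hmono ht.
rewrite hE0 Rmult_1_l => hle.
have -> : S t = exp (- beta * (t - t0)) * (E t * S t).
  rewrite /E -Rmult_assoc -exp_plus.
  have -> : - beta * (t - t0) + beta * (t - t0) = 0 by ring.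
  by rewrite exp_0; ring.
apply: Rmult_le_compat_l hle; exact: Rlt_le (exp_pos _).
Qed.

Lemma exp_stable_of_sandwich (X2 S : R -> R) a K beta t0 :
  0 < a -> 0 < K -> (forall t, 0 <= X2 t) ->
  (forall t, a * X2 t <= S t) -> (forall t, S t <= K * X2 t) ->
  (forall t, t0 <= t -> S t <= exp (- beta * (t - t0)) * S t0) ->
  forall t, t0 <= t -> sqrt (X2 t) <= sqrt (K / a) * exp (- (beta / 2) * (t - t0)) * sqrt (X2 t0).
Proof.
move=> ha hK hX hlow hup hdec t ht.
set E := exp (- (beta / 2) * (t - t0)).
have hE : exp (- beta * (t - t0)) = E * E by rewrite /E -exp_plus; congr exp; field.
have hT : X2 t <= K / a * (E * E * X2 t0).
  apply: (Rmult_le_reg_l a) => //.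
  have -> : a * (K / a * (E * E * X2 t0)) = E * E * (K * X2 t0) by field; lra.
  apply: Rle_trans (hlow t) (Rle_trans _ _ _ (hdec t ht) _); rewrite hE.
  by apply: Rmult_le_compat_l (hup t0); have := exp_pos (- (beta / 2) * (t - t0)); nra.
have hE0 : 0 < E := exp_pos _.
have hKa : 0 <= K / a by apply: Rlt_le; apply: Rdiv_lt_0_compat.
apply: Rle_trans (sqrt_le_1_alt _ _ hT) _.
rewrite sqrt_mult_alt // sqrt_mult_alt; last by have := hX t0; nra.
by rewrite sqrt_square; lra.
Qed.

(** * The storage function of the closed loop *)

Lemma sqnorm_add3_ge0 {I J K : finType} (x : I -> R) (y : J -> R) (w : K -> R) :
  0 <= sqnorm x + sqnorm y + sqnorm w.
Proof. by have := sqnorm_ge0 x; have := sqnorm_ge0 y; have := sqnorm_ge0 w; lra. Qed.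

Lemma decay_rate_of_bounds k2 k3 X S Sd : 0 < k2 -> 0 <= k3 -> 0 <= X ->
  S <= k2 / 2 * X -> Sd <= - k3 * X -> Sd <= - (k3 / k2) * S.
Proof.
move=> hk2 hk3 hX hS hSd.
have -> : - (k3 / k2) * S = - k3 * (S / k2) by field; lra.
have : S / k2 <= X.
  by apply: (Rmult_le_reg_l k2) => //; rewrite /Rdiv -Rmult_assoc Rinv_r_simpl_m; nra.
nra.
Qed.

Lemma weighted_sum_le_max a b c la lb lc : 0 <= a -> 0 <= b -> 0 <= c ->
  la * a + lb * b + lc * c <= Rmax la (Rmax lb lc) * (a + b + c).
Proof.
move=> ha hb hc; have := Rmax_l la (Rmax lb lc); have := Rmax_r la (Rmax lb lc).
have := Rmax_l lb lc; have := Rmax_r lb lc; nra.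
Qed.

Lemma weighted_sum_ge_min a b c la lb lc : 0 <= a -> 0 <= b -> 0 <= c ->
  Rmin la (Rmin lb lc) * (a + b + c) <= la * a + lb * b + lc * c.
Proof.
move=> ha hb hc; have := Rmin_l la (Rmin lb lc); have := Rmin_r la (Rmin lb lc).
have := Rmin_l lb lc; have := Rmin_r lb lc; nra.
Qed.

(* The left-hand side is dS/dt expressed through the error equations qt' = s - Pi qt,
   M s' = ..., zeta' = B^T s - Kz (zeta - zeta_d). *)
Lemma storage_dissipation {I J : finType} (Pi K Cm dM Mq : I -> I -> R)
    (Kz : J -> J -> R) (Bk : I -> J -> R) (qt s ds : I -> R) (e : J -> R) :
  msym Pi -> msym Kz -> mskew (fun p r => dM p r - 2 * Cm p r) ->
  (forall p, mv Mq ds p = - mv Cm s p - mv K s p - mv Pi qt p - mv Bk (mv Kz e) p) ->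
  bil Pi qt (vsub s (mv Pi qt)) + (bil Mq s ds + / 2 * quad dM s)
    + bil Kz e (vsub (mv (tr Bk) s) (mv Kz e))
  = - quad (mm Pi Pi) qt - quad K s - quad (mm Kz Kz) e.
Proof.
move=> hPi hKz hskew hds.
have passivity : bil Kz e (mv (tr Bk) s) = dot s (mv Bk (mv Kz e)).
  by rewrite bil_sym // /bil dot_sym dot_mv_tr dot_sym.
have kinetic : bil Mq s ds =
    - quad Cm s - quad K s - bil Pi qt s - dot s (mv Bk (mv Kz e)).
  rewrite (bil_sym qt s hPi).
  transitivity (rsum (fun p => - (s p * mv Cm s p) - s p * mv K s p - s p * mv Pi qt p
                               - s p * mv Bk (mv Kz e) p)).
    by apply: rsum_ext => p; rewrite hds; ring.
  by rewrite !rsum_minus rsum_opp.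
have skew : quad dM s = 2 * quad Cm s.
  by have := quad_skew s hskew; rewrite quad_sub_scal_mx; lra.
rewrite !bil_vsub -!quad_mm_bil passivity kinetic skew; lra.
Qed.

Section ClosedLoop.
Variables N Mm n : nat.
Variable B : 'I_N -> 'I_Mm -> R.
Variable Mi : 'I_N -> ('I_n -> R) -> 'I_n -> 'I_n -> R.
Variable dM : 'I_N -> ('I_n -> R) -> 'I_n -> 'I_n -> 'I_n -> R.
Variable Ci : 'I_N -> ('I_n -> R) -> ('I_n -> R) -> 'I_n -> 'I_n -> R.
Variable gi : 'I_N -> ('I_n -> R) -> 'I_n -> R.
Variables Pi Ki : 'I_N -> 'I_n -> 'I_n -> R.
Variable Kz : 'I_Mm * 'I_n -> 'I_Mm * 'I_n -> R.
Variable zd : 'I_Mm * 'I_n -> R.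
Variable D : nat -> R -> 'I_n -> R.

Hypothesis HMsym : forall i q, msym (Mi i q).
Hypothesis HdM : forall i a b, C1_with (fun q => Mi i q a b) (fun q k => dM i q k a b).
Hypothesis HCskew : forall i q v, mskew (fun a b => Mdot (dM i) q v a b - 2 * Ci i q v a b).
Hypothesis HD : forall k t a, derivable_pt_lim (fun t' => D k t' a) t (D k.+1 t a).
Hypothesis HPi : forall i, msym (Pi i).
Hypothesis HKz : msym Kz.

Variable t0 : R.
Variables q v vdot vrdot tau : R -> 'I_N * 'I_n -> R.
Variables z zdot : R -> 'I_Mm * 'I_n -> R.
Hypothesis Hsol : cl_solution B Mi Ci gi Pi Ki Kz zd D t0 q v vdot vrdot tau z zdot.

Let qt t := qtil (q t) (D 0%nat t).
Let s t := svar Pi (q t) (v t) (D 0%nat t) (D 1%nat t).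
Let e t := vsub (z t) zd.

Lemma cl_error_dynamics t : t0 < t -> forall p,
  mv (Mstack Mi (q t)) (fun p => vdot t p - vrdot t p) p =
    - mv (bdiag (fun i => Ci i (blk (q t) i) (blk (v t) i))) (s t) p
    - mv (bdiag Ki) (s t) p - mv (bdiag Pi) (qt t) p - mv (kronI B) (mv Kz (e t)) p.
Proof.
move=> ht [i a]; have [_ [_ [_ Hs]]] := Hsol.
have := Hs t ht; cbv zeta => -[_ [_ [_ [_ [htau [hdyn _]]]]]].
have h := hdyn i a; rewrite htau in h.
rewrite /Mstack !mv_bdiag /s /qt /e.
have hM : mv (Mi i (blk (q t) i)) (blk (fun p => vdot t p - vrdot t p) i) a =
    mv (Mi i (blk (q t) i)) (blk (vdot t) i) a - mv (Mi i (blk (q t) i)) (blk (vrdot t) i) a.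
  exact: mv_sub.
have hC : mv (Ci i (blk (q t) i) (blk (v t) i))
      (blk (svar Pi (q t) (v t) (D 0%nat t) (D 1%nat t)) i) a
  = mv (Ci i (blk (q t) i) (blk (v t) i)) (blk (v t) i) a -
    mv (Ci i (blk (q t) i) (blk (v t) i)) (blk (vref Pi (q t) (D 0%nat t) (D 1%nat t)) i) a.
  exact: mv_sub.
rewrite hM hC; move: h.
(* the pair indices of [Hsol] and of the goal elaborate differently; [set] identifies them *)
set X := mv (kronI B) _ _; set Y := mv (Pi i) _ _; set Z := mv (Ki i) _ _.
lra.
Qed.

Let S t := Sfun Pi Mi Kz zd (qt t) (s t) (z t) (q t).

Lemma cl_storage_deriv t : t0 < t ->
  derivable_pt_lim S t (Sdot_val Pi Ki Kz zd (qt t) (s t) (z t)).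
Proof.
move=> ht; have [_ [_ [_ Hs]]] := Hsol.
have := Hs t ht; cbv zeta => -[hdq [hdv [hdz [hdvr [_ [_ hzd]]]]]].
pose Cb := bdiag (fun i => Ci i (blk (q t) i) (blk (v t) i)).
pose dMst := bdiag (fun i => Mdot (dM i) (blk (q t) i) (blk (v t) i)).
have dqt p : derivable_pt_lim (fun u => qt u p) t (vsub (s t) (mv (bdiag Pi) (qt t)) p).
  have -> : vsub (s t) (mv (bdiag Pi) (qt t)) p = v t p - D 1%nat t p.2.
    by rewrite /vsub /s /svar /vsub /vref /qt; ring.
  exact: derivable_pt_lim_minus (hdq p) (HD 0 t p.2).
have ds p : derivable_pt_lim (fun u => s u p) t (vdot t p - vrdot t p).
  exact: derivable_pt_lim_minus (hdv p) (hdvr p).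
have dM_ p r : derivable_pt_lim (fun u => Mstack Mi (q u) p r) t (dMst p r).
  rewrite /dMst /Mstack /bdiag; case: eqP => _; last exact: derivable_pt_lim_const.
  exact: (C1_chain (c := fun u => blk (q u) p.1) (HdM p.1 p.2 r.2) (fun k => hdq (p.1, k))).
have de p : derivable_pt_lim (fun u => e u p) t
    (vsub (mv (tr (kronI B)) (s t)) (mv Kz (e t)) p).
  rewrite /vsub -hzd -[zdot t p]Rminus_0_r.
  exact: derivable_pt_lim_minus (hdz p) (derivable_pt_lim_const _ t).
have hskew : mskew (fun p r => dMst p r - 2 * Cb p r).
  move=> p r; rewrite /dMst /Cb /bdiag [r.1 == p.1]eq_sym.
  case: eqP => [->|_]; last ring.
  exact: HCskew.
rewrite /Sdot_val -(storage_dissipation (msym_bdiag HPi) HKz hskew (cl_error_dynamics ht)).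
apply: derivable_pt_lim_plus; first apply: derivable_pt_lim_plus.
- exact: derivable_pt_lim_half_quad_const (msym_bdiag HPi) dqt.
- exact: derivable_pt_lim_half_quad (msym_bdiag (fun i => HMsym i (blk (q t) i))) dM_ ds.
- exact: derivable_pt_lim_half_quad_const HKz de.
Qed.

Lemma cl_storage_rcont : rcont_at S t0.
Proof.
have [hq [hv [hz _]]] := Hsol.
have hqt p : rcont_at (fun u => qt u p) t0.
  exact: rcont_at_minus (hq p) (rcont_at_derivable (HD 0 t0 p.2)).
have hPi : rcont_at (fun u => quad (bdiag Pi) (qt u)) t0.
  by apply: (rcont_at_quad (A := fun _ => bdiag Pi) (x := qt)) => // p r; exact: rcont_at_const.
have hM : rcont_at (fun u => quad (Mstack Mi (q u)) (s u)) t0.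
  apply: (rcont_at_quad (A := fun u => Mstack Mi (q u)) (x := s)) => [p r|p].
    rewrite /Mstack /bdiag; case: eqP => _; last exact: rcont_at_const.
    apply: (rcont_at_vcont_comp (F := fun y => Mi p.1 y p.2 r.2) (c := fun u => blk (q u) p.1))
      => [|k]; last exact: hq.
    exact: C1_vcont (HdM p.1 p.2 r.2).
  apply: rcont_at_minus (hv p) _.
  apply: rcont_at_minus (rcont_at_derivable (HD 1 t0 p.2)) _.
  by rewrite /mv; apply: rcont_at_rsum => r; apply: rcont_at_mult (rcont_at_const _ _) (hqt r).
have hKz : rcont_at (fun u => quad Kz (e u)) t0.
  apply: (rcont_at_quad (A := fun _ => Kz) (x := e)) => [p r|p]; first exact: rcont_at_const.
  exact: rcont_at_minus (hz p) (rcont_at_const _ _).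
rewrite /S /Sfun /Pzeta.
by apply: rcont_at_plus; first apply: rcont_at_plus; apply: rcont_at_mult (rcont_at_const _ _) _.
Qed.

Lemma cl_storage_decay k2 k3 : 0 < k2 -> 0 <= k3 ->
  (forall qt s z q, Sfun Pi Mi Kz zd qt s z q <=
     k2 / 2 * (sqnorm qt + sqnorm s + sqnorm (vsub z zd))) ->
  (forall qt s z, Sdot_val Pi Ki Kz zd qt s z <=
     - k3 * (sqnorm qt + sqnorm s + sqnorm (vsub z zd))) ->
  (forall t, t0 < t ->
     let Sd := Sdot_val Pi Ki Kz zd (qt t) (s t) (z t) in
     derivable_pt_lim S t Sd /\ Sd <= - (k3 / k2) * S t) /\
  (forall t, t0 <= t -> S t <= exp (- (k3 / k2) * (t - t0)) * S t0).
Proof.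
move=> hk2 hk3 hup hdiss.
have hd t : t0 < t -> let Sd := Sdot_val Pi Ki Kz zd (qt t) (s t) (z t) in
    derivable_pt_lim S t Sd /\ Sd <= - (k3 / k2) * S t.
  move=> ht Sd; split; first exact: cl_storage_deriv.
  exact: decay_rate_of_bounds hk2 hk3 (sqnorm_add3_ge0 _ _ _) (hup _ _ _ _) (hdiss _ _ _).
split => //; apply: exp_decay_of_deriv_le cl_storage_rcont _ => t ht; exact: hd.
Qed.

Lemma cl_exp_stable a K beta : 0 < a -> 0 < K ->
  (forall qt s z q, a * (sqnorm qt + sqnorm s + sqnorm (vsub z zd)) <= Sfun Pi Mi Kz zd qt s z q) ->
  (forall qt s z q, Sfun Pi Mi Kz zd qt s z q <= K * (sqnorm qt + sqnorm s + sqnorm (vsub z zd))) ->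
  (forall t, t0 <= t -> S t <= exp (- beta * (t - t0)) * S t0) ->
  let X := fun t => sqrt (sqnorm (qt t) + sqnorm (s t) + sqnorm (e t)) in
  forall t, t0 <= t -> X t <= sqrt (K / a) * exp (- (beta / 2) * (t - t0)) * X t0.
Proof.
move=> ha hK hlow hup hdec X t ht.
apply: (exp_stable_of_sandwich (X2 := fun t => sqnorm (qt t) + sqnorm (s t) + sqnorm (e t))
  ha hK (fun u => sqnorm_add3_ge0 _ _ _) (fun u => hlow _ _ _ (q u)) (fun u => hup _ _ _ (q u))
  hdec ht).
Qed.

End ClosedLoop.

Section StorageBounds.
Variables N Mm n : nat.
Variables Pi Ki : 'I_N -> 'I_n -> 'I_n -> R.
Variable Mi : 'I_N -> ('I_n -> R) -> 'I_n -> 'I_n -> R.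
Variable Kz : 'I_Mm * 'I_n -> 'I_Mm * 'I_n -> R.
Variable zd : 'I_Mm * 'I_n -> R.

Lemma Sfun_le_max lPi lM lKz :
  (forall x, quad (bdiag Pi) x <= lPi * sqnorm x) ->
  (forall q x, quad (Mstack Mi q) x <= lM * sqnorm x) ->
  (forall x, quad Kz x <= lKz * sqnorm x) ->
  forall qt s z q, Sfun Pi Mi Kz zd qt s z q <=
    Rmax lPi (Rmax lM lKz) / 2 * (sqnorm qt + sqnorm s + sqnorm (vsub z zd)).
Proof.
move=> hPi hM hKz qt s z q; rewrite /Sfun /Pzeta.
have := weighted_sum_le_max lPi lM lKz (sqnorm_ge0 qt) (sqnorm_ge0 s) (sqnorm_ge0 (vsub z zd)).
have := hPi qt; have := hM q s; have := hKz (vsub z zd); lra.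
Qed.

Lemma Sfun_ge_min cPi cM cKz :
  (forall x, cPi * sqnorm x <= quad (bdiag Pi) x) ->
  (forall q x, cM * sqnorm x <= quad (Mstack Mi q) x) ->
  (forall x, cKz * sqnorm x <= quad Kz x) ->
  forall qt s z q, Rmin cPi (Rmin cM cKz) / 2 * (sqnorm qt + sqnorm s + sqnorm (vsub z zd)) <=
    Sfun Pi Mi Kz zd qt s z q.
Proof.
move=> hPi hM hKz qt s z q; rewrite /Sfun /Pzeta.
have := weighted_sum_ge_min cPi cM cKz (sqnorm_ge0 qt) (sqnorm_ge0 s) (sqnorm_ge0 (vsub z zd)).
have := hPi qt; have := hM q s; have := hKz (vsub z zd); lra.
Qed.

Lemma Sdot_val_le_min mPi2 mK mKz2 :
  (forall x, mPi2 * sqnorm x <= quad (mm (bdiag Pi) (bdiag Pi)) x) ->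
  (forall x, mK * sqnorm x <= quad (bdiag Ki) x) ->
  (forall x, mKz2 * sqnorm x <= quad (mm Kz Kz) x) ->
  forall qt s z, Sdot_val Pi Ki Kz zd qt s z <=
    - Rmin mPi2 (Rmin mK mKz2) * (sqnorm qt + sqnorm s + sqnorm (vsub z zd)).
Proof.
move=> hPi hK hKz qt s z; rewrite /Sdot_val.
have := weighted_sum_ge_min mPi2 mK mKz2 (sqnorm_ge0 qt) (sqnorm_ge0 s) (sqnorm_ge0 (vsub z zd)).
have := hPi qt; have := hK s; have := hKz (vsub z zd); lra.
Qed.

Lemma Mstack_quad_ge m1 : (forall i q x, m1 * sqnorm x <= quad (Mi i q) x) ->
  forall q x, m1 * sqnorm x <= quad (Mstack Mi q) x.
Proof.
move=> hM q x; rewrite /Mstack quad_bdiag /sqnorm dot_pair -rsum_scal.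
by apply: rsum_le => i; exact: hM.
Qed.

End StorageBounds.

Lemma quad_le_lub_lambda_max {T : Type} {I : finType} (A : T -> I -> I -> R) lM (p0 : I) :
  (forall q, msym (A q)) -> is_lub (fun l => exists q, is_lambda_max (A q) l) lM ->
  forall q x, quad (A q) x <= lM * sqnorm x.
Proof.
move=> hA [hub _] q x; have [l hl] := lambda_max_exists p0 (hA q).
have := lambda_max_quad_le (hA q) hl x; have := hub l (ex_intro _ q hl).
have := sqnorm_ge0 x; nra.
Qed.

Unset Implicit Arguments.

Theorem mainTheorem1
  (N Mm n : nat)
  (B : 'I_N -> 'I_Mm -> R)
  (Mi : 'I_N -> ('I_n -> R) -> 'I_n -> 'I_n -> R)
  (dM : 'I_N -> ('I_n -> R) -> 'I_n -> 'I_n -> 'I_n -> R)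
  (Ci : 'I_N -> ('I_n -> R) -> ('I_n -> R) -> 'I_n -> 'I_n -> R)
  (gi : 'I_N -> ('I_n -> R) -> 'I_n -> R)
  (Pot : 'I_N -> ('I_n -> R) -> R)
  (m1 m2 : R)
  (Pi Ki : 'I_N -> 'I_n -> 'I_n -> R)
  (Kz : 'I_Mm * 'I_n -> 'I_Mm * 'I_n -> R) (zd : 'I_Mm * 'I_n -> R)
  (D : nat -> R -> 'I_n -> R)
  (lPi lM lKz mPi2 mK mKz2 : R)
  (* graph *)
  (HB : is_incidence B)
  (* standing assumptions on the agents *)
  (HMsym : forall i q, msym (Mi i q))
  (Hm : 0 < m1 <= m2)
  (HMbnd : forall i q x, m1 * sqnorm x <= quad (Mi i q) x <= m2 * sqnorm x)
  (HdM : forall i a b, C1_with (fun q => Mi i q a b) (fun q k => dM i q k a b))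
  (HCdef : forall i q v a,
      mv (Ci i q v) v a = mv (Mdot (dM i) q v) v a - grad_kin (dM i) q v a)
  (HCskew : forall i q v, mskew (fun a b => Mdot (dM i) q v a b - 2 * Ci i q v a b))
  (Hg : forall i, has_partials (Pot i) (gi i))
  (* smooth reference trajectory: D k = k-th derivative of q_d = D 0 *)
  (HD : forall k t a, derivable_pt_lim (fun t' => D k t' a) t (D k.+1 t a))
  (* gains *)
  (HPi : forall i, spd (Pi i))
  (HK : forall i, spd (Ki i))
  (HKz : spd Kz)
  (* eigenvalue data for k2, k3 *)
  (HlPi : is_lambda_max (bdiag Pi) lPi)
  (HlM : is_lub (fun l => exists q : 'I_N * 'I_n -> R, is_lambda_max (Mstack Mi q) l) lM)
  (HlKz : is_lambda_max Kz lKz)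
  (HmPi2 : is_lambda_min (mm (bdiag Pi) (bdiag Pi)) mPi2)
  (HmK : is_lambda_min (bdiag Ki) mK)
  (HmKz2 : is_lambda_min (mm Kz Kz) mKz2) :
  let k2 := Rmax lPi (Rmax lM lKz) in
  let k3 := Rmin mPi2 (Rmin mK mKz2) in
  let beta := k3 / k2 in
  (forall t0 q v vdot vrdot tau z zdot,
     cl_solution B Mi Ci gi Pi Ki Kz zd D t0 q v vdot vrdot tau z zdot ->
     let S := fun t => Sfun Pi Mi Kz zd (qtil (q t) (D 0%nat t))
                          (svar Pi (q t) (v t) (D 0%nat t) (D 1%nat t)) (z t) (q t) in
     (forall t, t0 < t ->
        let Sd := Sdot_val Pi Ki Kz zd (qtil (q t) (D 0%nat t))
                    (svar Pi (q t) (v t) (D 0%nat t) (D 1%nat t)) (z t) in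
        derivable_pt_lim S t Sd /\ Sd <= - beta * S t) /\
     (forall t, t0 <= t -> S t <= exp (- beta * (t - t0)) * S t0))
  /\
  (* global uniform exponential stability of (qtilde, s, zeta) = (0, 0, zeta_d) *)
  (exists c lam, 0 < c /\ 0 < lam /\
     forall t0 q v vdot vrdot tau z zdot,
       cl_solution B Mi Ci gi Pi Ki Kz zd D t0 q v vdot vrdot tau z zdot ->
       let X := fun t => sqrt (sqnorm (qtil (q t) (D 0%nat t))
                               + sqnorm (svar Pi (q t) (v t) (D 0%nat t) (D 1%nat t))
                               + sqnorm (vsub (z t) zd)) in
       forall t, t0 <= t -> X t <= c * exp (- lam * (t - t0)) * X t0).
Proof.
move=> k2 k3 beta.
have [p0 _] : exists p : 'I_N * 'I_n, True by case: HlPi => -[x [[p _] _]] _; exists p.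
have [e0 _] : exists e : 'I_Mm * 'I_n, True by case: HlKz => -[x [[e _] _]] _; exists e.
have spdPi := spd_bdiag HPi.
have Sup := Sfun_le_max zd (lambda_max_quad_le spdPi.1 HlPi)
  (quad_le_lub_lambda_max p0 (fun q => msym_bdiag (fun i => HMsym i (blk q i))) HlM)
  (lambda_max_quad_le HKz.1 HlKz).
have Sdiss := Sdot_val_le_min zd (lambda_min_quad_ge (msym_mm spdPi.1) HmPi2)
  (lambda_min_quad_ge (spd_bdiag HK).1 HmK) (lambda_min_quad_ge (msym_mm HKz.1) HmKz2).
have k2pos : 0 < k2 := Rlt_le_trans _ _ _ (spd_eigenvalue_pos spdPi HlPi.1) (Rmax_l _ _).
have k3pos : 0 < k3 := Rmin_pos _ _ (spd_eigenvalue_pos (spd_mm spdPi) HmPi2.1)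
  (Rmin_pos _ _ (spd_eigenvalue_pos (spd_bdiag HK) HmK.1)
                (spd_eigenvalue_pos (spd_mm HKz) HmKz2.1)).
have decay t0 q v vdot vrdot tau z zdot
    (Hsol : cl_solution B Mi Ci gi Pi Ki Kz zd D t0 q v vdot vrdot tau z zdot) :=
  cl_storage_decay HMsym HdM HCskew HD (fun i => (HPi i).1) HKz.1 Hsol k2pos
    (Rlt_le _ _ k3pos) Sup Sdiss.
split; first exact: decay.
have [cPi [cPi0 hPi]] := spd_coercive p0 spdPi.
have [cKz [cKz0 hKz]] := spd_coercive e0 HKz.
have Slow := Sfun_ge_min zd hPi (Mstack_quad_ge (fun i q x => (HMbnd i q x).1)) hKz.
have a0 : 0 < Rmin cPi (Rmin m1 cKz) / 2.
  by have := Rmin_pos _ _ cPi0 (Rmin_pos _ _ (proj1 Hm) cKz0); lra.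
exists (sqrt (k2 / 2 / (Rmin cPi (Rmin m1 cKz) / 2))), (beta / 2).
split; first by apply: sqrt_lt_R0; apply: Rdiv_lt_0_compat; lra.
split; first by rewrite /beta; apply: Rdiv_lt_0_compat; [apply: Rdiv_lt_0_compat|]; lra.
move=> t0 q v vdot vrdot tau z zdot Hsol.
have hK : 0 < k2 / 2 by lra.
exact: (cl_exp_stable a0 hK Slow Sup (decay t0 q v vdot vrdot tau z zdot Hsol).2).
Qed.
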